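(* Let $(J,S)$ be a homogeneous $d$-dimensional multi-time Markov renewal chain with semi-Markov kernel $q$ and $u=\sum_{n\ge0}q^{(n)}$. Then $\mathrm{dg}(u)$ is convolutionally invertible, $u=\mathbbm{I}_s+g*\mathrm{dg}(u)$, and $$g=(u-\mathbbm{I}_s)*\mathrm{dg}(u)^{(-1)}.$$
   Context: $E=\{1,\dots,s\}$; $\mathcal{M}_s(\mathbb{N}^d)$ is the set of functions $\mathbb{N}^d\to\mathbb{R}^{s\times s}$ with convolution $[A*B](k)=\sum_{l+l'=k}A(l)B(l')$, identity $\mathbbm{I}_s$ ($I_s$ at $0_d$, zero elsewhere), powers $A^{(0)}=\mathbbm{I}_s$, $A^{(n)}=A*A^{(n-1)}$, convolutional inverse $A^{(-1)}$. $\mathbb{N}^d$ has the componentwise partial order, $k<l$ meaning $k\le l$, $k\ne l$. A homogeneous $d$-dimensional multi-time Markov renewal chain is a process $(J_n,S_n)_{n\in\mathbb{N}}$, $J_n\in E$, $S_n\in\mathbb{N}^d$, $S_0=0_d$, $S_n<S_{n+1}$, with a.s. $\mathbb{P}(J_{n+1}=j,S_{n+1}-S_n=k\mid J_{0:n},S_{0:n})=q_{J_nj}(k)$, $q_{ij}(k)=\mathbb{P}(J_{n+1}=j,S_{n+1}-S_n=k\mid J_n=i)$ independent of $n$. $\mathbb{P}_i$ denotes probability given $J_0=i$. $\mathrm{dg}(u)$ is the diagonal matrix sequence with diagonal entries $u_{jj}$. For $i,j\in E$, $g_{ij}(k)=\mathbb{P}_i(S_{m_j}=k)$ where $m_j=\min\{l\ge1:J_l=j\}$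 (first hitting time of $j$; for $i=j$ the recurrence time of $j$); $g=(g_{ij})$. *)

From HB Require Import structures.
From mathcomp Require Import all_boot all_order all_algebra.
From mathcomp Require Import all_classical all_reals all_analysis.
Set Implicit Arguments. Unset Strict Implicit. Unset Printing Implicit Defensive.
Import Order.TTheory GRing.Theory Num.Theory.
Local Open Scope classical_set_scope.
Local Open Scope ring_scope.

Definition vec (d : nat) := {ffun 'I_d -> nat}.
Definition vzero (d : nat) : vec d := [ffun => 0%N].
Definition vadd (d : nat) (a b : vec d) : vec d := [ffun t => (a t + b t)%N].
Definition vle (d : nat) (a b : vec d) : bool := [forall t, (a t <= b t)%N].
Definition vlt (d : nat) (a b : vec d) : bool := vle a b && (a != b).

(* the finite list of all l in N^d with l <= k *)
Definition box (d : nat) (k : vec d) : seq (vec d) :=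
  [seq l <- [seq [ffun t => (f t : nat)] | f : {ffun 'I_d -> 'I_(\max_(t < d) k t).+1}]
     | vle l k].

Definition mseq (R : nzRingType) (d s : nat) := vec d -> 'M[R]_s.

Definition mconv (R : nzRingType) (d s : nat) (A B : mseq R d s) : mseq R d s :=
  fun k => \sum_(l <- box k) \sum_(l' <- box k | vadd l l' == k) (A l *m B l').

Definition Id_seq (R : nzRingType) (d s : nat) : mseq R d s :=
  fun k => if k == vzero d then 1%:M else 0.
Arguments Id_seq R d s : clear implicits.

Definition msub (R : nzRingType) (d s : nat) (A B : mseq R d s) : mseq R d s :=
  fun k => A k - B k.
Definition madd (R : nzRingType) (d s : nat) (A B : mseq R d s) : mseq R d s :=
  fun k => A k + B k.

Fixpoint conv_pow (R : nzRingType) (d s : nat) (A : mseq R d s) (n : nat) : mseq R d s :=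
  match n with
  | 0 => Id_seq R d s
  | n'.+1 => mconv A (conv_pow A n')
  end.

Definition conv_inverse (R : nzRingType) (d s : nat) (A B : mseq R d s) : Prop :=
  mconv B A = Id_seq R d s /\ mconv A B = Id_seq R d s.

Definition mdg (R : nzRingType) (d s : nat) (A : mseq R d s) : mseq R d s :=
  fun k => \matrix_(i, j) (if i == j then A k i i else 0).

Definition useq (R : realType) (d s : nat) (q : mseq R d s) : mseq R d s :=
  fun k => \matrix_(i, j) limn (fun N => \sum_(0 <= n < N) conv_pow q n k i j).

(* Conditional probabilities given the (discrete)
   past are written in product form. *)
Definition is_MRC (R : realType) (d s : nat) (dT : measure_display)
  (T : measurableType dT) (P : 'I_s -> probability T R)
  (J : nat -> T -> 'I_s) (S : nat -> T -> vec d) (q : mseq R d s) : Prop :=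
     (forall n j, measurable [set w | J n w = j])
  /\ (forall n k, measurable [set w | S n w = k])
  /\ (forall i, P i [set w | J 0 w = i] = 1%E)
  /\ (forall i, P i [set w | S 0 w = vzero d] = 1%E)
  /\ (forall i n, P i [set w | vlt (S n w) (S n.+1 w)] = 1%E)
  /\
      (forall i n (js : nat -> 'I_s) (ks : nat -> vec d) j k,
          P i [set w | (forall m, (m <= n)%N -> J m w = js m /\ S m w = ks m)
                       /\ J n.+1 w = j /\ S n.+1 w = vadd (ks n) k]
          = (P i [set w | forall m, (m <= n)%N -> J m w = js m /\ S m w = ks m]
             * (q k (js n) j)%:E)%E).

Definition gseq (R : realType) (d s : nat) (dT : measure_display)
  (T : measurableType dT) (P : 'I_s -> probability T R)
  (J : nat -> T -> 'I_s) (S : nat -> T -> vec d) : mseq R d s :=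
  fun k => \matrix_(i, j)
    fine (P i [set w | exists l, [/\ (0 < l)%N, J l w = j,
                                     (forall l', (0 < l' < l)%N -> J l' w <> j)
                                     & S l w = k]]).

From HB Require Import structures.
From mathcomp Require Import all_boot all_order all_algebra.
From mathcomp Require Import all_classical all_reals all_analysis.
From mathcomp Require Import zify.
Set Implicit Arguments. Unset Strict Implicit. Unset Printing Implicit Defensive.
Import Order.TTheory GRing.Theory Num.Theory.
Local Open Scope ring_scope.

(* Write A_j (taboo) for the kernel q with the transitions into j deleted.  Since
   S is strictly increasing, q vanishes at 0_d, and then E^(n)(k) = 0 for n > |k|
   for every kernel E vanishing at 0_d: the convolution series of E is a finite
   sum at each k and inverts I - E.  Comparing the series u of q with the series
   W_j of A_j gives the resolvent identity u = W_j + W_j * (q - A_j) * u, whose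
   j-th column reads u = I + g * dg(u) as soon as g_ij = (W_j * q)_ij.  The latter
   is the Markov property: the probability that j is first visited at step n + 1,
   at time k, is (A_j^(n) * q)_ij(k), by induction on n, decomposing every event
   along the almost surely finitely many histories compatible with S_n <= k.
   Finally dg(u)(0_d) = I_s, so dg(u) is invertible and g = (u - I) * dg(u)^(-1). *)

Lemma big_pred1_seq (T : eqType) (V : nmodType) (r : seq T) (x : T) (F : T -> V) :
  uniq r -> x \in r -> \sum_(y <- r | y == x) F y = F x.
Proof. by move=> ur xr; rewrite -big_filter filter_pred1_uniq // big_seq1. Qed.

Section Points.
Variable d : nat.
Implicit Types a b c k l : vec d.

Definition vsub k l : vec d := [ffun t => (k t - l t)%N].
Definition vnorm k : nat := (\sum_(t < d) k t)%N.

Lemma vleP a b : reflect (forall t, a t <= b t)%N (vle a b).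
Proof. exact: forallP. Qed.

Lemma vle_refl a : vle a a.
Proof. by apply/vleP. Qed.

Lemma vle_trans b a c : vle a b -> vle b c -> vle a c.
Proof. by move=> /vleP ab /vleP bc; apply/vleP => t; apply: leq_trans (ab t) (bc t). Qed.

Lemma vle0 a : vle (vzero d) a.
Proof. by apply/vleP => t; rewrite ffunE. Qed.

Lemma vadd0 a : vadd a (vzero d) = a.
Proof. by apply/ffunP => t; rewrite !ffunE addn0. Qed.

Lemma vsub0 a : vsub a (vzero d) = a.
Proof. by apply/ffunP => t; rewrite !ffunE subn0. Qed.

Lemma vsubvv a : vsub a a = vzero d.
Proof. by apply/ffunP => t; rewrite !ffunE subnn. Qed.

Lemma vaddK a b : vsub (vadd a b) a = b.
Proof. by apply/ffunP => t; rewrite !ffunE addKn. Qed.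

Lemma vsubKC a b : vle a b -> vadd a (vsub b a) = b.
Proof. by move=> /vleP ab; apply/ffunP => t; rewrite !ffunE subnKC. Qed.

Lemma vsubD k a b : vsub k (vadd a b) = vsub (vsub k a) b.
Proof. by apply/ffunP => t; rewrite !ffunE subnDA. Qed.

Lemma vle_addr a b : vle a (vadd a b).
Proof. by apply/vleP => t; rewrite ffunE leq_addr. Qed.

Lemma vle_subr a b : vle (vsub a b) a.
Proof. by apply/vleP => t; rewrite ffunE leq_subr. Qed.

Lemma vle_sub2r a b c : vle b c -> vle (vsub b a) (vsub c a).
Proof. by move=> /vleP bc; apply/vleP => t; rewrite !ffunE leq_sub2r. Qed.

Lemma vle_subRL a b k : vle a k -> vle b (vsub k a) = vle (vadd a b) k.
Proof.
move=> /vleP ak; apply/vleP/vleP => h t; move: (h t) (ak t); rewrite !ffunE; lia.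
Qed.

Lemma vnormD a b : vnorm (vadd a b) = (vnorm a + vnorm b)%N.
Proof. by rewrite /vnorm -big_split; apply: eq_bigr => t _; rewrite ffunE. Qed.

Lemma vnormB a b : vle b a -> vnorm (vsub a b) = (vnorm a - vnorm b)%N.
Proof. by move=> ba; rewrite -{2}(vsubKC ba) vnormD addKn. Qed.

Lemma vnorm_le a b : vle a b -> (vnorm a <= vnorm b)%N.
Proof. by move=> ab; rewrite -(vsubKC ab) vnormD leq_addr. Qed.

Lemma vnorm_eq0 a : (vnorm a == 0%N) = (a == vzero d).
Proof.
apply/eqP/eqP => [a0|->]; last by rewrite /vnorm big1 // => t _; rewrite ffunE.
apply/ffunP => t; rewrite ffunE; apply/eqP; rewrite -leqn0 -a0.
by rewrite /vnorm (bigD1 t) //= leq_addr.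
Qed.

Lemma vlt_vnorm a b : vlt a b -> (vnorm a < vnorm b)%N.
Proof.
move=> /andP[ab neq]; rewrite -(vsubKC ab) vnormD -addn1 leq_add2l lt0n vnorm_eq0.
by apply: contra neq => /eqP ba0; rewrite -(vsubKC ab) ba0 vadd0.
Qed.

Lemma mem_box k l : (l \in box k) = vle l k.
Proof.
rewrite mem_filter andb_idr // => lk.
apply/mapP; exists [ffun t => inord (l t) : 'I_(\max_(t < d) k t).+1].
  by rewrite mem_enum.
apply/ffunP => t; rewrite !ffunE inordK // ltnS.
by apply: leq_trans (leq_bigmax t); move/vleP: lk.
Qed.

Lemma uniq_box k : uniq (box k).
Proof.
rewrite filter_uniq // map_inj_uniq ?enum_uniq // => f g /ffunP fg.
by apply/ffunP => t; apply/val_inj; move: (fg t); rewrite !ffunE.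
Qed.

Lemma big_box_sub (V : nmodType) k l (F : vec d -> V) : vle l k ->
  \sum_(a <- box l) F a = \sum_(a <- box k | vle a l) F a.
Proof.
move=> lk; rewrite -[RHS]big_filter; apply: perm_big; apply: (@uniq_perm (vec d)).
- exact: uniq_box.
- by rewrite filter_uniq // uniq_box.
by move=> a; rewrite [RHS]mem_filter !mem_box andb_idr // => /vle_trans; apply.
Qed.

Lemma big_box_shift (V : nmodType) k a (G : vec d -> V) : vle a k ->
  \sum_(l <- box k | vle a l) G l = \sum_(b <- box (vsub k a)) G (vadd a b).
Proof.
move=> ak; rewrite -[LHS]big_filter -(big_map (vadd a) xpredT G).
apply: perm_big; apply: (@uniq_perm (vec d)).
- by rewrite filter_uniq // uniq_box.
- by rewrite map_inj_uniq ?uniq_box // => x y xy; rewrite -(vaddK a x) xy vaddK.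
move=> l; rewrite [LHS]mem_filter mem_box; apply/andP/mapP => [[al lk]|[b]].
  by exists (vsub l a); rewrite ?vsubKC // mem_box vle_sub2r.
by rewrite mem_box => bk ->; rewrite vle_addr -vle_subRL.
Qed.

End Points.

Section Convolution.
Variables (R : nzRingType) (d s : nat).
Implicit Types A B C : mseq R d s.
Implicit Types k l : vec d.
Local Notation I := (Id_seq R d s).

Lemma mconvE A B k : mconv A B k = \sum_(l <- box k) A l *m B (vsub k l).
Proof.
rewrite /mconv big_seq [RHS]big_seq; apply: eq_bigr => l; rewrite mem_box => lk.
rewrite (eq_bigl (fun l' => l' == vsub k l)) ?big_pred1_seq ?uniq_box ?mem_box ?vle_subr //.
by move=> l' /=; apply/eqP/eqP => [<-|->]; rewrite ?vaddK ?vsubKC.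
Qed.

Lemma mconv_entry A B k a c :
  mconv A B k a c = \sum_(l <- box k) \sum_b A l a b * B (vsub k l) b c.
Proof. by rewrite mconvE summxE; apply: eq_bigr => l _; rewrite mxE. Qed.

Lemma eq_mconv_le A A' B B' k :
  (forall l, vle l k -> A l = A' l) -> (forall l, vle l k -> B l = B' l) ->
  mconv A B k = mconv A' B' k.
Proof.
move=> AA' BB'; rewrite !mconvE big_seq [RHS]big_seq; apply: eq_bigr => l.
by rewrite mem_box => lk; rewrite AA' // BB' // vle_subr.
Qed.

Lemma mconvA A B C : mconv A (mconv B C) = mconv (mconv A B) C.
Proof.
apply: funext => k; rewrite !mconvE.
transitivity (\sum_(a <- box k) \sum_(l <- box k | vle a l)
                 A a *m (B (vsub l a) *m C (vsub k l))).
  rewrite big_seq [RHS]big_seq; apply: eq_bigr => a; rewrite mem_box => ak.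
  rewrite mconvE mulmx_sumr big_box_shift //; apply: eq_bigr => b _.
  by rewrite vaddK vsubD.
rewrite (exchange_big_dep xpredT) //= big_seq [RHS]big_seq.
apply: eq_bigr => l; rewrite mem_box => lk.
rewrite mconvE mulmx_suml (big_box_sub _ lk); apply: eq_bigr => a _.
by rewrite mulmxA.
Qed.

Lemma mconv1r A : mconv A I = A.
Proof.
apply: funext => k; rewrite mconvE (bigD1_seq k) ?mem_box ?vle_refl ?uniq_box //=.
rewrite /Id_seq vsubvv eqxx mulmx1 big_seq_cond big1 ?addr0 // => l /andP[].
rewrite mem_box => lk lneqk; case: ifP => [/eqP kl0|_]; last by rewrite mulmx0.
by case/eqP: lneqk; rewrite -(vsubKC lk) kl0 vadd0.
Qed.

Lemma mconv1l A : mconv I A = A.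
Proof.
apply: funext => k; rewrite mconvE (bigD1_seq (vzero d)) ?mem_box ?vle0 ?uniq_box //=.
rewrite /Id_seq eqxx mul1mx vsub0 big1 ?addr0 // => l /negbTE ->.
by rewrite mul0mx.
Qed.

Lemma mconvDl A B C : mconv (madd A B) C = madd (mconv A C) (mconv B C).
Proof.
apply: funext => k; rewrite /madd !mconvE -big_split.
by apply: eq_bigr => l _; rewrite mulmxDl.
Qed.

Lemma mconvDr A B C : mconv A (madd B C) = madd (mconv A B) (mconv A C).
Proof.
apply: funext => k; rewrite /madd !mconvE -big_split.
by apply: eq_bigr => l _; rewrite mulmxDr.
Qed.

Lemma mconvBl A B C : mconv (msub A B) C = msub (mconv A C) (mconv B C).
Proof.
apply: funext => k; rewrite /msub !mconvE -sumrB.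
by apply: eq_bigr => l _; rewrite mulmxBl.
Qed.

Lemma mconvBr A B C : mconv A (msub B C) = msub (mconv A B) (mconv A C).
Proof.
apply: funext => k; rewrite /msub !mconvE -sumrB.
by apply: eq_bigr => l _; rewrite mulmxBr.
Qed.

Lemma mconv_suml A (F : nat -> mseq R d s) N k :
  mconv (fun l => \sum_(0 <= n < N) F n l) A k = \sum_(0 <= n < N) mconv (F n) A k.
Proof.
rewrite mconvE; under eq_bigr do rewrite mulmx_suml.
by rewrite exchange_big; apply: eq_bigr => n _; rewrite mconvE.
Qed.

Lemma mconv_sumr A (F : nat -> mseq R d s) N k :
  mconv A (fun l => \sum_(0 <= n < N) F n l) k = \sum_(0 <= n < N) mconv A (F n) k.
Proof.
rewrite mconvE; under eq_bigr do rewrite mulmx_sumr.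
by rewrite exchange_big; apply: eq_bigr => n _; rewrite mconvE.
Qed.

Lemma conv_powSr A n : conv_pow A n.+1 = mconv (conv_pow A n) A.
Proof.
elim: n => [|n IHn]; first by rewrite /= mconv1r mconv1l.
by rewrite -[LHS]/(mconv A (conv_pow A n.+1)) [in LHS]IHn mconvA.
Qed.

End Convolution.

Section Series.
Variables (R : nzRingType) (d s : nat).
Implicit Types E : mseq R d s.
Implicit Types k l : vec d.
Local Notation I := (Id_seq R d s).

Lemma conv_pow_small E n k :
  E (vzero d) = 0 -> (vnorm k < n)%N -> conv_pow E n k = 0.
Proof.
move=> E0; elim: n k => [//|n IHn] k kn /=; rewrite mconvE big_seq big1 // => l.
rewrite mem_box => lk; have [->|l0] := eqVneq l (vzero d); first by rewrite E0 mul0mx.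
rewrite IHn ?mulmx0 // vnormB //.
have : (0 < vnorm l)%N by rewrite lt0n vnorm_eq0.
by have := vnorm_le lk; lia.
Qed.

(* Truncating at n = |k| loses nothing for kernels vanishing at 0_d (conv_seriesE). *)
Definition conv_series E : mseq R d s :=
  fun k => \sum_(0 <= n < (vnorm k).+1) conv_pow E n k.

Lemma conv_seriesE E k N : E (vzero d) = 0 -> (vnorm k < N)%N ->
  conv_series E k = \sum_(0 <= n < N) conv_pow E n k.
Proof.
move=> E0 kN; rewrite [RHS](big_cat_nat _ (n := (vnorm k).+1)) //=.
rewrite [X in _ + X]big1_seq ?addr0 // => n /andP[_].
by rewrite mem_index_iota => /andP[kn _]; rewrite conv_pow_small.
Qed.

Lemma telescope_conv_pow E k : E (vzero d) = 0 ->
  \sum_(0 <= n < (vnorm k).+1) (conv_pow E n k - conv_pow E n.+1 k) = I k.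
Proof.
move=> E0; rewrite (telescope_sumr_eq (fun n => - conv_pow E n k)) //.
  by rewrite conv_pow_small // oppr0 add0r opprK.
by move=> n _; rewrite opprK addrC.
Qed.

Lemma conv_series_inverse E : E (vzero d) = 0 ->
  conv_inverse (msub I E) (conv_series E).
Proof.
move=> E0; have series_le k l : vle l k ->
    conv_series E l = \sum_(0 <= n < (vnorm k).+1) conv_pow E n l.
  by move=> lk; apply: conv_seriesE; rewrite // ltnS vnorm_le.
split; apply: funext => k; rewrite -(telescope_conv_pow k E0).
- rewrite (eq_mconv_le (series_le k) (fun _ _ => erefl)) mconv_suml.
  by apply: eq_bigr => n _; rewrite mconvBr mconv1r -conv_powSr.
- rewrite (eq_mconv_le (fun _ _ => erefl) (series_le k)) mconv_sumr.
  by apply: eq_bigr => n _; rewrite mconvBl mconv1l.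
Qed.

Lemma conv_inverse_unit0 A : A (vzero d) = 1%:M ->
  conv_inverse A (conv_series (msub I A)).
Proof.
move=> A0; have IA0 : msub I A (vzero d) = 0 by rewrite /msub A0 /Id_seq eqxx subrr.
have IIA : msub I (msub I A) = A by apply: funext => k; rewrite /msub opprB addrC subrK.
by have := conv_series_inverse IA0; rewrite IIA.
Qed.

Lemma mdg_conv_series0 E :
  mdg (conv_series E) (vzero d) = 1%:M.
Proof.
have vnorm0 : vnorm (vzero d) = 0%N by apply/eqP; rewrite vnorm_eq0.
apply/matrixP => a b; rewrite !mxE /conv_series vnorm0 big_nat1 /= /Id_seq eqxx mxE.
by case: eqVneq => [->|]; rewrite ?eqxx.
Qed.

Lemma conv_series_resolvent E F : E (vzero d) = 0 -> F (vzero d) = 0 ->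
  conv_series E =
  madd (conv_series F) (mconv (mconv (conv_series F) (msub E F)) (conv_series E)).
Proof.
move=> E0 F0; have [_ EU] := conv_series_inverse E0; have [WF _] := conv_series_inverse F0.
rewrite -[X in madd X _]mconv1r -EU mconvA -mconvDl -mconvDr.
have -> : madd (msub I E) (msub E F) = msub I F.
  by apply: funext => l; rewrite /madd /msub addrA subrK.
by rewrite WF mconv1l.
Qed.

End Series.

Lemma useq_conv_series (R : realType) (d s : nat) (q : mseq R d s) :
  q (vzero d) = 0 -> useq q = conv_series q.
Proof.
move=> q0; apply: funext => k; apply/matrixP => a b; rewrite mxE.
apply: norm_lim_near_cst => //; exists (vnorm k).+1 => // N /= kN.
by rewrite (conv_seriesE q0 kN) summxE.
Qed.

Section FirstPassage.
Variables (R : nzRingType) (d s : nat) (q : mseq R d s).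
Hypothesis q0 : q (vzero d) = 0.
Implicit Types k l : vec d.
Local Notation I := (Id_seq R d s).

Definition taboo (j : 'I_s) : mseq R d s :=
  fun k => \matrix_(a, c) (if c == j then 0 else q k a c).

Definition fpass : mseq R d s :=
  fun k => \matrix_(a, j) mconv (conv_series (taboo j)) q k a j.

Lemma taboo0 j : taboo j (vzero d) = 0.
Proof. by apply/matrixP => a c; rewrite !mxE q0 mxE if_same. Qed.

Lemma conv_pow_taboo_col j n k a : conv_pow (taboo j) n.+1 k a j = 0.
Proof.
rewrite conv_powSr mconv_entry big1 // => l _; apply: big1 => b _.
by rewrite mxE eqxx mulr0.
Qed.

Lemma conv_series_taboo_col j k a : conv_series (taboo j) k a j = I k a j.
Proof.
by rewrite summxE big_nat_recl // big1 ?addr0 // => n _; rewrite conv_pow_taboo_col.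
Qed.

Lemma mconv_taboo_compl X j l a c :
  mconv X (msub q (taboo j)) l a c = if c == j then mconv X q l a c else 0.
Proof.
rewrite !mconv_entry; case: eqP => [->|/eqP cj].
  by apply: eq_bigr => l' _; apply: eq_bigr => b _; rewrite !mxE eqxx subr0.
by apply: big1 => l' _; apply: big1 => b _; rewrite !mxE (negbTE cj) subrr mulr0.
Qed.

Lemma conv_series_renewal :
  conv_series q = madd I (mconv fpass (mdg (conv_series q))).
Proof.
apply: funext => k; apply/matrixP => a j.
rewrite {1}(conv_series_resolvent q0 (taboo0 j)) /madd !mxE conv_series_taboo_col.
congr (_ + _).
rewrite !mconv_entry; apply: eq_bigr => l _.
rewrite (bigD1 j) // [RHS](bigD1 j) //= !big1 ?addr0 => [|c cj|c cj].
- by rewrite mconv_taboo_compl eqxx !mxE eqxx.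
- by rewrite !mxE (negbTE cj) mulr0.
- by rewrite mconv_taboo_compl (negbTE cj) mul0r.
Qed.

End FirstPassage.

Local Open Scope classical_set_scope.

Lemma preimage_countable_measurable d (T : measurableType d) (U : countType)
    (f : T -> U) (Phi : set U) :
  (forall x, measurable (f @^-1` [set x])) -> measurable (f @^-1` Phi).
Proof.
move=> mf; have -> : f @^-1` Phi = \bigcup_x (f @^-1` [set x] `&` [set _ | Phi x]).
  by apply/seteqP; split => [w Phiw|w [x _ [/= <-]]] //; exists (f w).
apply: countable_bigcupT_measurable => [|x]; first exact: countableP.
have [Phix|nPhix] := pselect (Phi x).
  by rewrite (_ : [set _ | Phi x] = setT) ?setIT //; apply/seteqP; split.
by rewrite (_ : [set _ | Phi x] = set0) ?setI0 //; apply/seteqP; split.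
Qed.

Section MarkovRenewalChain.
Variables (R : realType) (d s : nat) (dT : measure_display) (T : measurableType dT).
Variables (P : 'I_s -> probability T R) (J : nat -> T -> 'I_s) (S : nat -> T -> vec d).
Variable q : mseq R d s.
Hypothesis chain : is_MRC P J S q.
Local Notation state := ('I_s * vec d)%type.
Implicit Types (n m : nat) (k : vec d) (b j : 'I_s) (x : state) (h : seq state).

Definition chain_at n x : set T := [set w | (J n w, S n w) = x].

Lemma measurable_chain_at n x : measurable (chain_at n x).
Proof.
have [mJ [mS _]] := chain; case: x => b k.
rewrite (_ : chain_at n (b, k) = [set w | J n w = b] `&` [set w | S n w = k]).
  exact: measurableI.
by apply/seteqP; split => w /= [<- <-]; split.
Qed.

#[local] Hint Resolve measurable_chain_at : core.

Definition hist n w : seq state := [seq (J m w, S m w) | m <- iota 0 n].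
Arguments hist : simpl never.

Lemma size_hist n w : size (hist n w) = n.
Proof. by rewrite size_map size_iota. Qed.

Lemma nth_hist n w m x0 : (m < n)%N -> nth x0 (hist n w) m = (J m w, S m w).
Proof. by move=> mn; rewrite (nth_map 0%N) ?size_iota // nth_iota. Qed.

Lemma histS n w : hist n.+1 w = rcons (hist n w) (J n w, S n w).
Proof. by rewrite /hist -addn1 iotaD map_cat cats1. Qed.

Lemma hist_eqP n w h x0 : size h = n.+1 ->
  hist n.+1 w = h <->
  (forall m, (m <= n)%N -> J m w = (nth x0 h m).1 /\ S m w = (nth x0 h m).2).
Proof.
move=> sh; split => [<- m mn|hw]; first by rewrite nth_hist.
apply: (@eq_from_nth _ x0); first by rewrite size_hist sh.
move=> m; rewrite size_hist ltnS => mn; rewrite nth_hist //.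
by have [-> ->] := hw m mn; case: nth.
Qed.

Lemma measurable_hist_eq n h : measurable [set w | hist n w = h].
Proof.
elim: n h => [|n IHn] h.
  case: h => [|x h]; first by rewrite (_ : [set w | _] = setT) //; apply/seteqP.
  by rewrite (_ : [set w | _] = set0) //; apply/seteqP; split.
case/lastP: h => [|h x].
  rewrite (_ : [set w | _] = set0) //; apply/seteqP; split => w //=.
rewrite (_ : [set w | _] = [set w | hist n w = h] `&` chain_at n x).
  by apply: measurableI => //; exact: measurable_chain_at.
apply/seteqP; split => w /=; rewrite histS; first by move/rcons_inj => [<- <-]; split.
by case=> <- <-.
Qed.

Lemma measurable_hist n (Phi : set (seq state)) : measurable [set w | Phi (hist n w)].
Proof. exact: (preimage_countable_measurable (f := hist n) Phi (measurable_hist_eq n)). Qed.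

Definition box_states k : seq state := [seq (b, l) | b <- index_enum 'I_s, l <- box k].

Lemma mem_box_states k x : (x \in box_states k) = vle x.2 k.
Proof.
case: x => b l; apply/allpairsP/idP => [[[b' l'] /= [_ + [_ ->]]]|lk].
  by rewrite mem_box.
by exists (b, l); rewrite mem_index_enum mem_box.
Qed.

Lemma uniq_box_states k : uniq (box_states k).
Proof.
by rewrite allpairs_uniq ?index_enum_uniq ?uniq_box // => -[? ?] [? ?].
Qed.

Fixpoint box_paths k n : seq (seq state) :=
  if n is n'.+1 then [seq rcons h x | h <- box_paths k n', x <- box_states k]
  else [:: [::]].

Lemma mem_box_paths k n h :
  (h \in box_paths k n) = (size h == n) && all (fun x => vle x.2 k) h.
Proof.
elim: n h => [|n IHn] h; first by case: h.
case/lastP: h => [|h x] /=.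
  by apply/allpairsP => -[[h' x] [_ _]] /(congr1 size); rewrite size_rcons.
rewrite size_rcons eqSS all_rcons andbCA -mem_box_states -IHn.
apply/allpairsP/andP => [[[h' x'] /= [h'P x'P /rcons_inj[-> ->]]]|[xP hP]] //.
by exists (h, x).
Qed.

Lemma uniq_box_paths k n : uniq (box_paths k n).
Proof.
elim: n => [//|n IHn] /=; rewrite allpairs_uniq ?uniq_box_states //.
by move=> [h x] [h' x'] _ _ /rcons_inj.
Qed.

(* The initial state does not count as a visit. *)
Definition avoids j (h : seq state) : bool := all (fun x => x.1 != j) (behead h).

Lemma avoids_hist j n w : avoids j (hist n.+1 w) = all (fun m => J m w != j) (iota 1 n).
Proof. by rewrite /avoids /hist /= all_map. Qed.

Lemma avoids_histS j n w :
  avoids j (hist n.+2 w) = avoids j (hist n.+1 w) && (J n.+1 w != j).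
Proof. by rewrite !avoids_hist -(addn1 n) iotaD all_cat /= andbT add1n addn1. Qed.

Definition hit_at j n k : set T :=
  [set w | avoids j (hist n.+1 w)] `&` chain_at n.+1 (j, k).

Lemma first_hitP j k w :
  (exists m, [/\ (0 < m)%N, J m w = j,
                 (forall m', (0 < m' < m)%N -> J m' w <> j) & S m w = k]) <->
  exists n, hit_at j n k w.
Proof.
split => [[m [m0 Jj Jnj Sk]]|[n [Aw [Jj Sk]]]]; last first.
  exists n.+1; split => // m /andP[m0 mn]; apply/eqP.
  by move: Aw; rewrite /= avoids_hist => /allP; apply; rewrite mem_iota m0 add1n.
case: m m0 Jj Jnj Sk => // n _ Jj Jnj Sk.
exists n; split; last by rewrite /chain_at /= Jj Sk.
rewrite /= avoids_hist; apply/allP => m; rewrite mem_iota => /andP[m0 mn].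
by apply/eqP/Jnj; rewrite m0 -add1n.
Qed.

Lemma hit_at_disjoint j k : trivIset setT (fun n => hit_at j n k).
Proof.
have hit_lt m n w : (m < n)%N -> hit_at j m k w -> ~ hit_at j n k w.
  move=> mn [_ [Jj _]] [An _]; move: An; rewrite /= avoids_hist => /allP/(_ m.+1).
  by rewrite mem_iota ltn0Sn add1n ltnS mn Jj eqxx => /(_ isT).
move=> m n _ _ [w [hm hn]]; case: (ltngtP m n) => // mn.
  by case: (hit_lt _ _ _ mn hm hn).
by case: (hit_lt _ _ _ mn hn hm).
Qed.

Section InitialState.
Variable i : 'I_s.

Definition regular : set T :=
  [set w | J 0 w = i] `&` [set w | S 0 w = vzero d] `&`
  \bigcap_n [set w | vlt (S n w) (S n.+1 w)].

Lemma negligible_not_regular : (P i).-negligible (~` regular).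
Proof.
have [mJ [mS [J0 [S0 [Slt _]]]]] := chain.
have null_compl A : measurable A -> P i A = 1%E -> (P i).-negligible (~` A).
  move=> mA PA1; apply/(negligibleP (P i) (measurableC mA)).
  by have := probability_setC (P i) mA; rewrite PA1 subee.
rewrite !setCI setC_bigcap; apply: negligibleU; first apply: negligibleU.
- exact: null_compl.
- exact: null_compl.
apply: negligible_bigcup => n; apply: null_compl => //.
apply: (preimage_countable_measurable (f := fun w => (S n w, S n.+1 w))
  (fun p => vlt p.1 p.2)) => -[a b].
rewrite (_ : _ @^-1` _ = [set w | S n w = a] `&` [set w | S n.+1 w = b]).
  exact: measurableI.
by apply/seteqP; split => w /= [<- <-]; split.
Qed.

Definition pr (A : set T) : R := fine (P i A).

Lemma prE A : measurable A -> P i A = (pr A)%:E.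
Proof.
move=> mA; rewrite /pr fineK // ge0_fin_numE ?measure_ge0 //.
by apply: le_lt_trans (probability_le1 _ mA) _; exact: ltey.
Qed.

Lemma pr0 : pr set0 = 0.
Proof. by rewrite /pr measure0. Qed.

Lemma prT : pr setT = 1.
Proof. by rewrite /pr probability_setT. Qed.

Lemma pr_eq_ae A B : measurable A -> measurable B ->
  (forall w, regular w -> A w <-> B w) -> pr A = pr B.
Proof.
move=> mA mB AB; congr fine.
have PI X Y : measurable X -> measurable Y ->
    (forall w, regular w -> X w -> Y w) -> P i X = P i (X `&` Y).
  move=> mX mY XY; rewrite (measureDI (P i) mX mY) [X in (X + _)%E](_ : _ = 0%E) ?add0e //.
  apply: measure_negligible; first exact: measurableD.
  apply: negligibleS negligible_not_regular => w [Xw nYw] regw.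
  exact: nYw (XY w regw Xw).
by rewrite (PI A B) ?(PI B A) 1?setIC // => w /AB [].
Qed.

Lemma pr_bigcup_seq (I : choiceType) (r : seq I) (F : I -> set T) :
  uniq r -> (forall y, measurable (F y)) -> trivIset setT F ->
  pr (\bigcup_(y in [set` r]) F y) = \sum_(y <- r) pr (F y).
Proof.
move=> ur mF tF; apply: EFin_inj.
rewrite -prE; last exact: fin_bigcup_measurable (finite_seq r) (fun t _ => mF t).
rewrite measure_fin_bigcup ?finite_seq //; last exact: sub_trivIset tF.
by rewrite -fsbig_seq // -sumEFin; apply: eq_bigr => y _; exact: prE.
Qed.

Lemma pr_partition (U : choiceType) (f : T -> U) (r : seq U) A :
  uniq r -> measurable A -> (forall y, measurable (f @^-1` [set y])) ->
  (forall w, regular w -> A w -> f w \in r) ->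
  pr A = \sum_(y <- r) pr (A `&` f @^-1` [set y]).
Proof.
move=> ur mA mf Ar.
have mAf y : measurable (A `&` f @^-1` [set y]) by exact: measurableI.
rewrite -pr_bigcup_seq //; last by move=> y y' _ _ [w [[_ /= <-] [_ /= <-]]].
apply: pr_eq_ae => //; first exact: fin_bigcup_measurable (finite_seq r) (fun t _ => mAf t).
move=> w regw; split => [Aw|[y _ []//]].
by exists (f w); [exact: Ar | split].
Qed.

Lemma regular_le w m n : regular w -> (m <= n)%N -> vle (S m w) (S n w).
Proof.
move=> [_ Slt]; elim: n => [|n IHn]; first by rewrite leqn0 => /eqP ->; exact: vle_refl.
rewrite leq_eqVlt => /orP[/eqP -> |/IHn mn]; first exact: vle_refl.
by apply: vle_trans mn _; case/andP: (Slt n I).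
Qed.

Lemma regular_vnorm w n : regular w -> (n <= vnorm (S n w))%N.
Proof.
move=> [_ Slt]; elim: n => [//|n IHn].
exact: leq_ltn_trans IHn (vlt_vnorm (Slt n I)).
Qed.

Lemma hist_box_paths w n k : regular w -> vle (S n w) k -> hist n w \in box_paths k n.
Proof.
move=> regw nk; rewrite mem_box_paths size_hist eqxx /=.
apply/allP => y /mapP[m]; rewrite mem_iota add0n => /andP[_ mn] -> /=.
exact: vle_trans (regular_le regw (ltnW mn)) nk.
Qed.

Lemma pr_hist_partition n A x k : measurable A -> vle x.2 k ->
  pr (A `&` chain_at n x) =
  \sum_(h <- box_paths k n) pr (A `&` chain_at n x `&` [set w | hist n w = h]).
Proof.
move=> mA xk; apply: (pr_partition (f := hist n)).
- exact: uniq_box_paths.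
- by apply: measurableI => //; exact: measurable_chain_at.
- exact: measurable_hist_eq.
by move=> w regw [_ Snx]; apply: hist_box_paths regw _; rewrite -Snx in xk.
Qed.

Lemma pr_cylinder_next n h x b k : size h = n -> vle x.2 k ->
  pr ([set w | hist n.+1 w = rcons h x] `&` chain_at n.+1 (b, k)) =
  pr [set w | hist n.+1 w = rcons h x] * q (vsub k x.2) x.1 b.
Proof.
move=> sh xk; have [_ [_ [_ [_ [_ kernel]]]]] := chain.
have shx : size (rcons h x) = n.+1 by rewrite size_rcons sh.
set js := fun m => (nth x (rcons h x) m).1; set ks := fun m => (nth x (rcons h x) m).2.
have xn : nth x (rcons h x) n = x by rewrite nth_rcons sh ltnn eqxx.
have cylE : [set w | hist n.+1 w = rcons h x] =
    [set w | forall m, (m <= n)%N -> J m w = js m /\ S m w = ks m].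
  by apply/seteqP; split => w /(hist_eqP w x shx).
have mH := measurable_hist_eq n.+1 (rcons h x).
have mHC : measurable ([set w | hist n.+1 w = rcons h x] `&` chain_at n.+1 (b, k)).
  by apply: measurableI => //; exact: measurable_chain_at.
apply: EFin_inj; rewrite EFinM -!prE //.
have := kernel i n js ks b (vsub k x.2).
rewrite /js /ks xn vsubKC // -/js -/ks -cylE => <-.
by congr (P i _); apply/seteqP; split => w /= [/(hist_eqP w x shx) Hw [<- <-]].
Qed.

Lemma pr_hist_next n (Phi : set (seq state)) h x b k : size h = n -> vle x.2 k ->
  pr ([set w | Phi (hist n.+1 w)] `&` chain_at n.+1 (b, k) `&` chain_at n x
      `&` [set w | hist n w = h]) =
  pr ([set w | Phi (hist n.+1 w)] `&` chain_at n x `&` [set w | hist n w = h])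
  * q (vsub k x.2) x.1 b.
Proof.
move=> sh xk; have cylE : chain_at n x `&` [set w | hist n w = h] =
    [set w | hist n.+1 w = rcons h x].
  apply/seteqP; split => w /=; rewrite histS; first by case=> -> ->.
  by move/rcons_inj => [<- <-].
rewrite -!setIA cylE setICA.
have [Phih|nPhih] := pselect (Phi (rcons h x)).
  rewrite (_ : [set w | Phi _] `&` _ = [set w | hist n.+1 w = rcons h x]).
    by rewrite setIC pr_cylinder_next.
  by apply/seteqP; split => [w []//|w /= Hw]; rewrite Hw.
rewrite (_ : [set w | Phi _] `&` _ = set0) ?setI0 ?pr0 ?mul0r //.
by apply/seteqP; split => // w /= [+ Hw]; rewrite Hw.
Qed.

(* The kernel hypothesis of is_MRC only speaks of exact histories, hence the
   decomposition along the state at step n and the finitely many histories before it. *)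
Lemma pr_chain_at_next n (Phi : set (seq state)) (Y : mseq R d s) b k :
  (forall x, pr ([set w | Phi (hist n.+1 w)] `&` chain_at n x) = Y x.2 i x.1) ->
  pr ([set w | Phi (hist n.+1 w)] `&` chain_at n.+1 (b, k)) = mconv Y q k i b.
Proof.
move=> hY; set A := [set w | Phi (hist n.+1 w)].
have mA : measurable A := measurable_hist n.+1 Phi.
have mAC : measurable (A `&` chain_at n.+1 (b, k)).
  by apply: measurableI => //; exact: measurable_chain_at.
rewrite (pr_partition (f := fun w => (J n w, S n w)) (r := box_states k)) //; first last.
- move=> w regw [_ /= [_ Sk]]; rewrite mem_box_states /= -Sk.
  exact: regular_le regw (leqnSn n).
- exact: measurable_chain_at.
- exact: uniq_box_states.
rewrite mconv_entry exchange_big /=.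
rewrite -(big_allpairs (F := fun x : state => Y x.2 i x.1 * q (vsub k x.2) x.1 b)).
apply: eq_big_seq => x; rewrite mem_box_states => xk.
rewrite -hY (pr_hist_partition _ mA xk) (pr_hist_partition _ mAC xk) mulr_suml.
apply: eq_big_seq => h; rewrite mem_box_paths => /andP[/eqP sh _].
exact: pr_hist_next.
Qed.

Lemma pr_chain_at0 b k : pr (chain_at 0 (b, k)) = Id_seq R d s k i b.
Proof.
rewrite /Id_seq; have [->|k0] := eqVneq k (vzero d); rewrite mxE; last first.
  rewrite -pr0; apply: pr_eq_ae => // w [[_ S0] _]; split => // -[_ Sk].
  by move: k0; rewrite -Sk S0 eqxx.
have [<-|ib] := eqVneq i b.
  apply: eq_trans prT; apply: pr_eq_ae => // w [[J0 S0] _].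
  by split => // _; rewrite /chain_at /= J0 S0.
apply: eq_trans pr0; apply: pr_eq_ae => // w [[J0 _] _]; split => // -[Jb _].
by move: ib; rewrite -Jb J0 eqxx.
Qed.

Lemma pr_taboo j n x :
  pr ([set w | avoids j (hist n.+1 w)] `&` chain_at n x) =
  conv_pow (taboo q j) n x.2 i x.1.
Proof.
elim: n x => [|n IHn] [b k].
  by rewrite -pr_chain_at0; congr pr; apply/seteqP; split => w // [].
have [->|bj] := eqVneq b j.
  rewrite conv_pow_taboo_col -pr0; congr pr; apply/seteqP; split => w //= [].
  by rewrite avoids_histS => /andP[_ /eqP nJ] [/nJ].
rewrite (_ : [set w | _] `&` _ =
    [set w | avoids j (hist n.+1 w)] `&` chain_at n.+1 (b, k)).
  rewrite (pr_chain_at_next (Phi := avoids j) _ _ IHn) conv_powSr !mconv_entry.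
  by apply: eq_bigr => l _; apply: eq_bigr => c _; rewrite mxE (negbTE bj).
apply/seteqP; split => w [Aw Cw]; split => //; move: Aw; rewrite /= avoids_histS.
  by case/andP.
by case: Cw => -> _ ->.
Qed.

Lemma pr_hit_at j n k : pr (hit_at j n k) = mconv (conv_pow (taboo q j) n) q k i j.
Proof. exact: (pr_chain_at_next (Phi := avoids j) j k (pr_taboo j n)). Qed.

Lemma gseq_fpass_entry (q0 : q (vzero d) = 0) j k : gseq P J S k i j = fpass q k i j.
Proof.
set N := (vnorm k).+1.
have mhit n : measurable (hit_at j n k).
  by apply: measurableI; [exact: (measurable_hist _ (avoids j))|exact: measurable_chain_at].
rewrite /gseq mxE -/(pr _).
rewrite (_ : pr _ = pr (\bigcup_(n in [set` index_iota 0 N]) hit_at j n k)).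
  rewrite (pr_bigcup_seq (iota_uniq _ _) mhit (@hit_at_disjoint j k)) /fpass mxE.
  rewrite (eq_mconv_le (A' := fun l => \sum_(0 <= n < N) conv_pow (taboo q j) n l)
    (B' := q)) //; last first.
    by move=> l lk; apply: conv_seriesE; [exact: taboo0 | rewrite /N ltnS vnorm_le].
  by rewrite mconv_suml summxE; apply: eq_bigr => n _; rewrite pr_hit_at.
apply: pr_eq_ae.
- rewrite (_ : [set w | _] = \bigcup_n hit_at j n k); first exact: bigcupT_measurable.
  apply/seteqP; split => w; first by case/first_hitP => n hn; exists n.
  by case=> n _ hn; apply/first_hitP; exists n.
- exact: fin_bigcup_measurable (finite_seq _) (fun n _ => mhit n).
move=> w regw; split => [/first_hitP[n hn]|[n _ hn]]; last by apply/first_hitP; exists n.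
(* Almost surely |S_m| >= m, so a first visit at time k happens within |k| + 1 steps. *)
exists n => //=; rewrite mem_index_iota /= /N ltnS.
case: hn => _ [_ <-]; exact: ltnW (regular_vnorm n.+1 regw).
Qed.

Lemma mrc_kernel0_row b : q (vzero d) i b = 0.
Proof.
have := pr_cylinder_next (h := [::]) (x := (i, vzero d)) b (k := vzero d) erefl (vle_refl _).
rewrite vsubvv /=.
have mH : measurable [set w | hist 1 w = [:: (i, vzero d)]] := measurable_hist_eq 1 _.
have -> : pr ([set w | hist 1 w = [:: (i, vzero d)]] `&` chain_at 1 (b, vzero d)) = 0.
  rewrite -pr0; apply: pr_eq_ae => //.
    by apply: measurableI => //; exact: measurable_chain_at.
  move=> w [[_ S0] Slt]; split => // -[_ [_ S1]].
  by move: (Slt 0%N I) => /=; rewrite S0 S1 /vlt eqxx andbF.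
have -> : pr [set w | hist 1 w = [:: (i, vzero d)]] = 1.
  rewrite -prT; apply: pr_eq_ae => // w [[J0 S0] _].
  by split => // _; rewrite /hist /= J0 S0.
by rewrite mul1r.
Qed.

End InitialState.

Lemma mrc_kernel0 : q (vzero d) = 0.
Proof. by apply/matrixP => a b; rewrite mxE (mrc_kernel0_row a). Qed.

Lemma gseq_fpass : gseq P J S = fpass q.
Proof.
apply: funext => k; apply/matrixP => a j.
exact: gseq_fpass_entry a mrc_kernel0 j k.
Qed.

End MarkovRenewalChain.

Theorem proposition10 (R : realType) (d s : nat) (dT : measure_display)
  (T : measurableType dT) (P : 'I_s -> probability T R)
  (J : nat -> T -> 'I_s) (S : nat -> T -> vec d) (q : mseq R d s) :
  is_MRC P J S q ->
  let u := useq q in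
  let g := gseq P J S in
  (exists B, conv_inverse (mdg u) B) /\
  u = madd (Id_seq R d s) (mconv g (mdg u)) /\
  (forall B, conv_inverse (mdg u) B -> g = mconv (msub u (Id_seq R d s)) B).
Proof.
move=> chain u g; have q0 := mrc_kernel0 chain.
have uE : u = conv_series q := useq_conv_series q0.
have renewal : u = madd (Id_seq R d s) (mconv g (mdg u)).
  by rewrite /g (gseq_fpass chain) uE; exact: conv_series_renewal q0.
split.
  exists (conv_series (msub (Id_seq R d s) (mdg u))).
  by apply: conv_inverse_unit0; rewrite uE mdg_conv_series0.
split => // B [_ mdgB].
have -> : msub u (Id_seq R d s) = mconv g (mdg u).
  by apply: funext => k; rewrite [in LHS]renewal /msub /madd addrC addKr.
by rewrite -mconvA mdgB mconv1r.
Qed.
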